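(* Let $\Phi$ (dimension $d$) and $\Psi$ (dimension $e$) be $\mathbf t$-modules over $K$, let $\delta\in\mathrm{Der}(\Phi,\Psi)$, and let $X$ be the $\mathbf t$-module with $X_a=\begin{bmatrix}\Phi_a&0\\ \delta(a)&\Psi_a\end{bmatrix}$, giving the short exact sequence $0\to\Psi\xrightarrow{i}X\xrightarrow{\pi}\Phi\to0$ with $i=\begin{bmatrix}0\\ I_e\end{bmatrix}$, $\pi=\begin{bmatrix}I_d&0\end{bmatrix}$. Then: (i) for every $\mathbf t$-module $\Xi$ of dimension $r$ and every morphism $g:\Xi\to\Phi$ of $\mathbf t$-modules, the pullback of this sequence along $g$ exists in the category of $\mathbf t$-modules and is the $\mathbf t$-module $Y$ with $Y_a=\begin{bmatrix}\Xi_a&0\\ \delta(a)g&\Psi_a\end{bmatrix}$ (i.e. the extension given by the biderivation $\delta\cdot g$), together with the morphisms $\begin{bmatrix}I_r&0\end{bmatrix}:Y\to\Xi$ and $\begin{bmatrix}g&0\\0&I_e\end{bmatrix}:Y\to X$; (ii) for every $\mathbf t$-module $\Xi$ of dimension $r$ and every morphism $f:\Psi\to\Xi$ of $\mathbf t$-modules, the pushout of this sequence along $f$ exists in the category of $\mathbf t$-modules and is the $\mathbf t$-module $Y$ with $Y_a=\begin{bmatrix}\Phi_a&0\\ f\delta(a)&\Xi_a\end{bmatrix}$ (the extension given by the biderivation $f\cdot\delta$), together with the morphisms $\begin{bmatrix}0\\ I_r\end{bmatrix}:\Xi\to Y$ and $\begin{bmatrix}I_d&0\\0&f\end{bmatrix}:X\to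 Y$.
   Context: $A=\mathbb F_q[t]$, $K$ a field of characteristic $p$ with $\mathbb F_q$-algebra map $\iota:A\to K$, $\theta=\iota(t)$; $K\{\tau\}$ twisted polynomials with $\tau x=x^q\tau$. A $\mathbf t$-module of dimension $d$: $\mathbb F_q$-algebra homomorphism $\Phi:\mathbb F_q[t]\to\mathrm{Mat}_d(K\{\tau\})$ with $\Phi_t=(\theta I+N)+\sum_{i\ge1}M_i\tau^i$, $N$ nilpotent. A morphism from $\Psi$ (dim $e$) to $\Phi$ (dim $d$) is $f\in\mathrm{Mat}_{d\times e}(K\{\tau\})$ with $f\Psi_t=\Phi_tf$; composition is matrix multiplication. $\mathrm{Der}(\Phi,\Psi)$ is the space of $\mathbb F_q$-linear $\delta:\mathbb F_q[t]\to\mathrm{Mat}_{e\times d}(K\{\tau\})$ with $\delta(ab)=\Psi_a\delta(b)+\delta(a)\Phi_b$. *)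

From HB Require Import structures.
From mathcomp Require Import all_boot all_order all_algebra.
Set Implicit Arguments. Unset Strict Implicit. Unset Printing Implicit Defensive.
Import GRing.Theory.
Local Open Scope ring_scope.

(* Setting: Fq a finite field with q := #|Fq| elements, K a field with an
   embedding iota0 : Fq -> K (so K is an Fq-algebra of characteristic p),
   A = {poly Fq} = Fq[t], and the Fq-algebra map iota : A -> K is the one
   extending iota0 with iota t = theta.

   Twisted polynomials K{tau}: an element sum_i a_i tau^i is represented by
   its coefficient sequence, i.e. by a {poly K} (the variable 'X playing
   the role of tau); only the *twisted* product [tmul] below is used for
   multiplication (tau x = x^q tau), addition is coefficientwise. *)

Section TModules.
Variables (Fq : finFieldType) (K : fieldType) (iota0 : {rmorphism Fq -> K})
          (theta : K).

Local Notation q := #|Fq|.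

Definition tmul (P Q : {poly K}) : {poly K} :=
  \sum_(i < size P) \sum_(j < size Q) ((P`_i * Q`_j ^+ (q ^ i)) *: 'X^(i + j)).

Definition tmulmx m n p (A : 'M[{poly K}]_(m, n)) (B : 'M[{poly K}]_(n, p))
  : 'M[{poly K}]_(m, p) :=
  \matrix_(i, j) \sum_(k < n) tmul (A i k) (B k j).

Definition fqscale m n (c : Fq) (A : 'M[{poly K}]_(m, n)) : 'M[{poly K}]_(m, n) :=
  map_mx (fun P => iota0 c *: P) A.

Definition is_tmodule d (Phi : {poly Fq} -> 'M[{poly K}]_d) : Prop :=
  [/\ forall (c : Fq) (a b : {poly Fq}), Phi (c *: a + b) = fqscale c (Phi a) + Phi b,
      Phi 1 = 1%:M,
      forall a b : {poly Fq}, Phi (a * b) = tmulmx (Phi a) (Phi b) &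
      exists N : 'M[K]_d, (exists k, N ^+ k = 0) /\
         map_mx (fun P : {poly K} => P`_0) (Phi 'X) = theta%:M + N].

(* f : Psi -> Phi (Psi of dim e, Phi of dim d) : f Psi_t = Phi_t f *)
Definition is_tmorph d e (Phi : {poly Fq} -> 'M[{poly K}]_d)
  (Psi : {poly Fq} -> 'M[{poly K}]_e) (f : 'M[{poly K}]_(d, e)) : Prop :=
  tmulmx f (Psi 'X) = tmulmx (Phi 'X) f.

Definition is_der d e (Phi : {poly Fq} -> 'M[{poly K}]_d)
  (Psi : {poly Fq} -> 'M[{poly K}]_e) (delta : {poly Fq} -> 'M[{poly K}]_(e, d))
  : Prop :=
  (forall (c : Fq) (a b : {poly Fq}), delta (c *: a + b) = fqscale c (delta a) + delta b)
  /\ (forall a b : {poly Fq},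
        delta (a * b) = tmulmx (Psi a) (delta b) + tmulmx (delta a) (Phi b)).

Definition is_pullback dA dB dC dP
  (FA : {poly Fq} -> 'M[{poly K}]_dA) (FB : {poly Fq} -> 'M[{poly K}]_dB)
  (FC : {poly Fq} -> 'M[{poly K}]_dC) (FP : {poly Fq} -> 'M[{poly K}]_dP)
  (g : 'M[{poly K}]_(dC, dA)) (h : 'M[{poly K}]_(dC, dB))
  (p1 : 'M[{poly K}]_(dA, dP)) (p2 : 'M[{poly K}]_(dB, dP)) : Prop :=
  [/\ is_tmodule FP, is_tmorph FA FP p1, is_tmorph FB FP p2,
      tmulmx g p1 = tmulmx h p2 &
      forall dW (FW : {poly Fq} -> 'M[{poly K}]_dW)
             (u : 'M[{poly K}]_(dA, dW)) (v : 'M[{poly K}]_(dB, dW)),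
        is_tmodule FW -> is_tmorph FA FW u -> is_tmorph FB FW v ->
        tmulmx g u = tmulmx h v ->
        exists! w : 'M[{poly K}]_(dP, dW),
          [/\ is_tmorph FP FW w, tmulmx p1 w = u & tmulmx p2 w = v]].

Definition is_pushout dA dB dC dP
  (FA : {poly Fq} -> 'M[{poly K}]_dA) (FB : {poly Fq} -> 'M[{poly K}]_dB)
  (FC : {poly Fq} -> 'M[{poly K}]_dC) (FP : {poly Fq} -> 'M[{poly K}]_dP)
  (g : 'M[{poly K}]_(dA, dC)) (h : 'M[{poly K}]_(dB, dC))
  (j1 : 'M[{poly K}]_(dP, dA)) (j2 : 'M[{poly K}]_(dP, dB)) : Prop :=
  [/\ is_tmodule FP, is_tmorph FP FA j1, is_tmorph FP FB j2,
      tmulmx j1 g = tmulmx j2 h &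
      forall dW (FW : {poly Fq} -> 'M[{poly K}]_dW)
             (u : 'M[{poly K}]_(dW, dA)) (v : 'M[{poly K}]_(dW, dB)),
        is_tmodule FW -> is_tmorph FW FA u -> is_tmorph FW FB v ->
        tmulmx u g = tmulmx v h ->
        exists! w : 'M[{poly K}]_(dW, dP),
          [/\ is_tmorph FW FP w, tmulmx w j1 = u & tmulmx w j2 = v]].

End TModules.

Arguments tmul Fq {K} P Q.
Arguments tmulmx Fq {K m n p} A B.
Arguments is_tmorph {Fq K d e} Phi Psi f.

From HB Require Import structures.
From mathcomp Require Import all_boot all_order all_algebra.
From mathcomp Require Import pgroup abelian finfield.
Set Implicit Arguments. Unset Strict Implicit. Unset Printing Implicit Defensive.
Import GRing.Theory.
Local Open Scope ring_scope.

(* Twisted polynomials form a ring because x |-> x^q is additive on K (q is a power of the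
   characteristic), so t-modules are matrix representations of Fq[t] over K{tau} in which
   the constants of Fq act centrally, and biderivations are derivations between two such
   representations. Everything then reduces to lower block-triangular matrix algebra:
   composing a biderivation with a morphism gives a biderivation, the extension it defines
   is again a t-module (a lower block-triangular matrix with nilpotent diagonal blocks is
   nilpotent), and a cone (u, v) over the pullback diagram factors through the extension
   only via [col_mx u (dsubmx v)], since the first projection fixes the top block and the
   second leg the bottom one; dually, a pushout cone factors only via
   [row_mx (lsubmx u) v]. *)

Lemma big_ord_widen0 (V : nmodType) m n (F : nat -> V) : (m <= n)%N ->
  (forall i, (m <= i)%N -> F i = 0) -> \sum_(i < m) F i = \sum_(i < n) F i.
Proof.
move=> le_mn F0; rewrite (big_ord_widen n F le_mn) big_mkcond.
by apply: eq_bigr => i _; case: ltnP => // /F0 ->.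
Qed.

Lemma poly_additive_ext (K : nzRingType) (V : zmodType) (f g : {poly K} -> V) :
  {morph f : x y / x + y} -> {morph g : x y / x + y} ->
  (forall a i, f (a *: 'X^i) = g (a *: 'X^i)) -> f =1 g.
Proof.
move=> fD gD fg P.
have f0 : f 0 = 0 by apply: (@addrI _ (f 0)); rewrite -fD !addr0.
have g0 : g 0 = 0 by apply: (@addrI _ (g 0)); rewrite -gD !addr0.
rewrite -[P]coefK poly_def (big_morph f fD f0) (big_morph g gD g0).
exact: eq_bigr.
Qed.

Section TwistedMultiplication.
Variables (Fq : finFieldType) (K : fieldType) (iota0 : {rmorphism Fq -> K}).
Local Notation q := #|Fq|.
Local Notation tmul := (@tmul Fq K).

Lemma pchar_nat_card_exp n : [pchar K].-nat (q ^ n)%N.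
Proof.
have [p _ pFq] := finPcharP Fq.
rewrite (eq_pnat _ (pcharf_eq (rmorph_pchar iota0 pFq))) pnatX.
have := abelem_pgroup (fin_ring_pchar_abelem pFq).
by rewrite /pgroup cardsT => ->.
Qed.

Lemma frobeniusD n (x y : K) : (x + y) ^+ (q ^ n)%N = x ^+ (q ^ n)%N + y ^+ (q ^ n)%N.
Proof. exact: exprDn_pchar (pchar_nat_card_exp n). Qed.

Lemma frobenius0 n : (0 : K) ^+ (q ^ n)%N = 0.
Proof. by rewrite expr0n expn_eq0 (gtn_eqF (ltnW (finNzRing_gt1 Fq))). Qed.

Lemma frobenius_Fq n (c : Fq) : iota0 c ^+ (q ^ n)%N = iota0 c.
Proof.
elim: n => [|n IHn]; first by rewrite expr1.
by rewrite expnSr exprM IHn -rmorphXn expf_card.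
Qed.

Lemma tmulE m n (P Q : {poly K}) : (size P <= m)%N -> (size Q <= n)%N ->
  tmul P Q = \sum_(i < m) \sum_(j < n) ((P`_i * Q`_j ^+ (q ^ i)%N) *: 'X^(i + j)).
Proof.
move=> lePm leQn; pose F i := \sum_(j < size Q) (P`_i * Q`_j ^+ (q ^ i)%N) *: 'X^(i + j).
rewrite /tmul (big_ord_widen0 (F := F) lePm) => [|i lePi]; last first.
  by apply: big1 => j _; rewrite nth_default // mul0r scale0r.
apply: eq_bigr => i _.
apply: (big_ord_widen0 (F := fun j => (P`_i * Q`_j ^+ (q ^ i)%N) *: 'X^(i + j))) => // j leQj.
by rewrite (nth_default _ leQj) frobenius0 mulr0 scale0r.
Qed.

Lemma tmulDl : left_distributive tmul +%R.
Proof.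
move=> P P' Q; set m := maxn (size P) (size P').
rewrite !(@tmulE m (size Q)) ?leq_maxl ?leq_maxr ?size_polyD // -big_split.
apply: eq_bigr => i _; rewrite -big_split; apply: eq_bigr => j _.
by rewrite coefD mulrDl scalerDl.
Qed.

Lemma tmulDr : right_distributive tmul +%R.
Proof.
move=> P Q Q'; set n := maxn (size Q) (size Q').
rewrite !(@tmulE (size P) n) ?leq_maxl ?leq_maxr ?size_polyD // -big_split.
apply: eq_bigr => i _; rewrite -big_split; apply: eq_bigr => j _.
by rewrite coefD frobeniusD mulrDr scalerDl.
Qed.

Lemma tmulZXn (a b : K) i j :
  tmul (a *: 'X^i) (b *: 'X^j) = (a * b ^+ (q ^ i)%N) *: 'X^(i + j).
Proof.
rewrite (@tmulE i.+1 j.+1) ?(leq_trans (size_scale_leq _ _)) ?size_polyXn //.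
rewrite big_ord_recr big1 => [|k _] /=; last first.
  by apply: big1 => l _; rewrite coefZ coefXn (ltn_eqF (ltn_ord k)) mulr0 mul0r scale0r.
rewrite add0r big_ord_recr big1 => [|l _] /=; last first.
  by rewrite (coefZ b) coefXn (ltn_eqF (ltn_ord l)) mulr0 frobenius0 mulr0 scale0r.
by rewrite add0r !coefZ !coefXn !eqxx !mulr1.
Qed.

Lemma tmulA : associative tmul.
Proof.
move=> P Q R; move: P; apply: poly_additive_ext => [x y|x y|a i];
  rewrite ?(tmulDl, tmulDr) //.
move: Q; apply: poly_additive_ext => [x y|x y|b j]; rewrite ?(tmulDl, tmulDr) //.
move: R; apply: poly_additive_ext => [x y|x y|c k]; rewrite ?(tmulDl, tmulDr) //.
by rewrite !tmulZXn addnA exprMn -exprM -expnD addnC mulrA.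
Qed.

Lemma tmulCl (k : K) P : tmul k%:P P = k *: P.
Proof.
move: P; apply: poly_additive_ext => [x y|x y|a i]; first exact: tmulDr.
  exact: scalerDr.
by rewrite -alg_polyC -(expr0 'X) tmulZXn expn0 expr1 add0n scalerA.
Qed.

Lemma tmul_Fqr (c : Fq) P : tmul P (iota0 c)%:P = iota0 c *: P.
Proof.
move: P; apply: poly_additive_ext => [x y|x y|a i]; first exact: tmulDl.
  exact: scalerDr.
by rewrite -alg_polyC -(expr0 'X) tmulZXn frobenius_Fq addn0 scalerA mulrC.
Qed.

Lemma tmul1l : left_id 1 tmul.
Proof. by move=> P; rewrite -polyC1 tmulCl scale1r. Qed.

Lemma tmul1r : right_id 1 tmul.
Proof. by move=> P; rewrite -polyC1 -(rmorph1 iota0) tmul_Fqr rmorph1 scale1r. Qed.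

End TwistedMultiplication.

(* [iota0] does not enter the carrier: it only records that K has the characteristic of Fq,
   which is what makes [tmul] distribute over addition. *)
Definition twisted (Fq : finFieldType) (K : fieldType) of {rmorphism Fq -> K} : Type :=
  {poly K}.

HB.instance Definition _ Fq K iota0 := GRing.Zmodule.on (@twisted Fq K iota0).
HB.instance Definition _ Fq K iota0 :=
  GRing.Zmodule_isNzRing.Build (@twisted Fq K iota0) (tmulA iota0)
    (tmul1l iota0) (tmul1r iota0) (@tmulDl Fq K) (tmulDr iota0)
    (@oner_neq0 {poly K}).

Section LowerBlockMatrices.
Variable R : pzRingType.

Lemma mul_row1_block_lower m n (A : 'M[R]_m) (C : 'M_(n, m)) (B : 'M_n) :
  row_mx 1%:M 0 *m block_mx A 0 C B = A *m row_mx 1%:M (0 : 'M_(m, n)).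
Proof. by rewrite mul_row_block mul_mx_row !mul1mx !mul0mx !addr0 mulmx1 mulmx0. Qed.

Lemma mul_block_lower_col01 m n (A : 'M[R]_m) (C : 'M_(n, m)) (B : 'M_n) :
  block_mx A 0 C B *m col_mx 0 1%:M = col_mx (0 : 'M_(m, n)) 1%:M *m B.
Proof. by rewrite mul_block_col mul_col_mx !mulmx0 !mulmx1 !mul0mx mul1mx !add0r. Qed.

Lemma mul_diag_block_lower m m' n n' (g : 'M[R]_(m, m')) (h : 'M_(n, n'))
    (A : 'M_m) (A' : 'M_m') (C : 'M_(n, m)) (C' : 'M_(n', m')) (B : 'M_n) (B' : 'M_n') :
    g *m A' = A *m g -> h *m C' = C *m g -> h *m B' = B *m h ->
  block_mx g 0 0 h *m block_mx A' 0 C' B' = block_mx A 0 C B *m block_mx g 0 0 h.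
Proof.
move=> gA hC hB; rewrite !mulmx_block !mulmx0 !mul0mx !addr0 !add0r.
by rewrite gA hC hB.
Qed.

Lemma block_lower_expr m n (A : 'M[R]_m) (C : 'M_(n, m)) (B : 'M_n) k :
  exists Ck, block_mx A 0 C B ^+ k = block_mx (A ^+ k) 0 Ck (B ^+ k).
Proof.
elim: k => [|k [Ck IHk]]; first by exists 0; rewrite !expr0 -scalar_mx_block.
exists (C *m A ^+ k + B *m Ck); rewrite exprS IHk -mulmxE mulmx_block.
by rewrite !mulmx0 !mul0mx !addr0 add0r !mulmxE -!exprS.
Qed.

Lemma block_lower_nilpotent m n (A : 'M[R]_m) (C : 'M_(n, m)) (B : 'M_n) :
    (exists k, A ^+ k = 0) -> (exists k, B ^+ k = 0) ->
  exists k, block_mx A 0 C B ^+ k = 0.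
Proof.
move=> [kA Ak0] [kB Bk0]; exists (kB + kA)%N; rewrite exprD.
have [CA ->] := block_lower_expr A C B kA; have [CB ->] := block_lower_expr A C B kB.
by rewrite Ak0 Bk0 -mulmxE mulmx_block !mulmx0 !mul0mx !addr0 block_mx0.
Qed.

Lemma block_lower_pullback m n r k (A : 'M[R]_m) (C : 'M_(n, m)) (B : 'M_n)
    (A' : 'M_r) (g : 'M_(m, r)) (W : 'M_k) (u : 'M_(r, k)) (v : 'M_(m + n, k)) :
    u *m W = A' *m u -> v *m W = block_mx A 0 C B *m v ->
    g *m u = row_mx 1%:M 0 *m v ->
  exists! w : 'M_(r + n, k),
    [/\ w *m W = block_mx A' 0 (C *m g) B *m w, row_mx 1%:M 0 *m w = u
      & block_mx g 0 0 1%:M *m w = v].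
Proof.
rewrite -[v]vsubmxK mul_row_col mul1mx mul0mx addr0.
rewrite mul_col_mx mul_block_col mul0mx addr0 => uW /eq_col_mx[_ v2W] v1E.
rewrite -v1E in v2W *.
exists (col_mx u (dsubmx v)); split.
  split.
  - by rewrite mul_col_mx mul_block_col mul0mx addr0 uW v2W mulmxA.
  - by rewrite mul_row_col mul1mx mul0mx addr0.
  - by rewrite mul_block_col mul1mx !mul0mx addr0 add0r.
move=> w [_]; rewrite -[w]vsubmxK mul_row_col mul1mx mul0mx addr0 => ->.
by rewrite mul_block_col mul1mx !mul0mx addr0 add0r => /eq_col_mx[_ ->].
Qed.

Lemma block_lower_pushout m n r k (A : 'M[R]_m) (C : 'M_(n, m)) (B : 'M_n)
    (B' : 'M_r) (f : 'M_(r, n)) (W : 'M_k) (u : 'M_(k, m + n)) (v : 'M_(k, r)) :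
    u *m block_mx A 0 C B = W *m u -> v *m B' = W *m v ->
    u *m col_mx 0 1%:M = v *m f ->
  exists! w : 'M_(k, m + r),
    [/\ w *m block_mx A 0 (f *m C) B' = W *m w, w *m block_mx 1%:M 0 0 f = u
      & w *m col_mx 0 1%:M = v].
Proof.
rewrite -[u]hsubmxK mul_row_block mulmx0 add0r mul_mx_row => /eq_row_mx[u1W _] vW.
rewrite mul_row_col mulmx1 mulmx0 add0r => u2E; rewrite u2E in u1W *.
exists (row_mx (lsubmx u) v); split.
  split.
  - by rewrite mul_mx_row mul_row_block mulmx0 add0r -u1W vW mulmxA.
  - by rewrite mul_row_block mulmx1 !mulmx0 addr0 add0r.
  - by rewrite mul_row_col mulmx1 mulmx0 add0r.
move=> w [_]; rewrite -[w]hsubmxK mul_row_block mulmx1 !mulmx0 addr0 add0r.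
by rewrite mul_row_col mulmx1 mulmx0 add0r => /eq_row_mx[-> _] ->.
Qed.

End LowerBlockMatrices.

Section Representations.
Variables (F : nzRingType) (R : pzRingType) (s : F -> R).
Hypotheses (s1 : s 1 = 1) (s_central : forall c x, x * s c = s c * x).

Definition is_rep d (Phi : {poly F} -> 'M[R]_d) : Prop :=
  [/\ forall c a b, Phi (c *: a + b) = (s c)%:M *m Phi a + Phi b,
      Phi 1 = 1%:M & forall a b, Phi (a * b) = Phi a *m Phi b].

Definition is_rep_der d e (Phi : {poly F} -> 'M[R]_d) (Psi : {poly F} -> 'M[R]_e)
    (delta : {poly F} -> 'M[R]_(e, d)) : Prop :=
  (forall c a b, delta (c *: a + b) = (s c)%:M *m delta a + delta b) /\
  (forall a b, delta (a * b) = Psi a *m delta b + delta a *m Phi b).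

Lemma scalar_mx_central m n c (A : 'M[R]_(m, n)) : A *m (s c)%:M = (s c)%:M *m A.
Proof.
apply/matrixP => i j; rewrite mul_scalar_mx !mxE (bigD1 j) //= big1 => [|k /negbTE kj].
  by rewrite mxE eqxx mulr1n addr0 s_central.
by rewrite mxE kj mulr0n mulr0.
Qed.

Lemma rep0 d (Phi : {poly F} -> 'M[R]_d) : is_rep Phi -> Phi 0 = 0.
Proof.
case=> Phi_lin _ _; have := Phi_lin 1 0 0.
by rewrite scale1r addr0 s1 mul1mx -{1}[Phi 0]add0r => /addIr.
Qed.

Variables (d e : nat) (Phi : {poly F} -> 'M[R]_d) (Psi : {poly F} -> 'M[R]_e).
Hypotheses (Phi_rep : is_rep Phi) (Psi_rep : is_rep Psi).

Lemma rep_intertwine (g : 'M[R]_(d, e)) :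
  g *m Psi 'X = Phi 'X *m g -> forall a, g *m Psi a = Phi a *m g.
Proof.
have [Phi_lin Phi1 PhiM] := Phi_rep; have [Psi_lin Psi1 PsiM] := Psi_rep.
move=> gX; elim/poly_ind => [|a c IHa].
  by rewrite (rep0 Phi_rep) (rep0 Psi_rep) mulmx0 mul0mx.
rewrite addrC -alg_polyC Psi_lin Phi_lin PsiM PhiM Psi1 Phi1 mulmxDr mulmxDl.
by rewrite !mulmx1 mulmxA scalar_mx_central IHa -!mulmxA gX.
Qed.

Variable delta : {poly F} -> 'M[R]_(e, d).
Hypothesis delta_der : is_rep_der Phi Psi delta.

Lemma rep_der1 : delta 1 = 0.
Proof.
have [_ Phi1 _] := Phi_rep; have [_ Psi1 _] := Psi_rep; have [_ deltaM] := delta_der.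
have := deltaM 1 1; rewrite mulr1 Phi1 Psi1 mul1mx mulmx1 -{1}[delta 1]addr0.
by move/addrI.
Qed.

Lemma rep_block_lower : is_rep (fun a => block_mx (Phi a) 0 (delta a) (Psi a)).
Proof.
have [Phi_lin Phi1 PhiM] := Phi_rep; have [Psi_lin Psi1 PsiM] := Psi_rep.
have [delta_lin deltaM] := delta_der.
split=> [c a b|| a b].
- rewrite Phi_lin Psi_lin delta_lin (scalar_mx_block d e) mulmx_block add_block_mx.
  by rewrite !mulmx0 !mul0mx !addr0 !add0r.
- by rewrite Phi1 Psi1 rep_der1 -scalar_mx_block.
- rewrite PhiM PsiM deltaM mulmx_block !mulmx0 !mul0mx !addr0 add0r.
  by rewrite addrC.
Qed.

Lemma rep_der_mulmxr r (Xi : {poly F} -> 'M[R]_r) (g : 'M[R]_(d, r)) :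
  (forall a, g *m Xi a = Phi a *m g) -> is_rep_der Xi Psi (fun a => delta a *m g).
Proof.
have [delta_lin deltaM] := delta_der; move=> g_int; split=> [c a b|a b].
  by rewrite delta_lin mulmxDl mulmxA.
by rewrite deltaM mulmxDl -!mulmxA g_int.
Qed.

Lemma rep_der_mulmxl r (Xi : {poly F} -> 'M[R]_r) (f : 'M[R]_(r, e)) :
  (forall a, f *m Psi a = Xi a *m f) -> is_rep_der Phi Xi (fun a => f *m delta a).
Proof.
have [delta_lin deltaM] := delta_der; move=> f_int; split=> [c a b|a b].
  by rewrite delta_lin mulmxDr !mulmxA scalar_mx_central.
by rewrite deltaM mulmxDr !mulmxA f_int.
Qed.

End Representations.

Section TModules.
Variables (Fq : finFieldType) (K : fieldType) (iota0 : {rmorphism Fq -> K}) (theta : K).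
Local Notation T := (twisted iota0).

Definition tconst (c : Fq) : T := (iota0 c)%:P.

Lemma tconst1 : tconst 1 = 1.
Proof. by rewrite /tconst rmorph1. Qed.

Lemma tconst_central c (x : T) : x * tconst c = tconst c * x.
Proof. by rewrite [LHS](tmul_Fqr iota0) [RHS](tmulCl iota0). Qed.

Lemma tmulmxE m n p (A : 'M[{poly K}]_(m, n)) (B : 'M[{poly K}]_(n, p)) :
  tmulmx Fq A B = (A : 'M[T]_(m, n)) *m (B : 'M[T]_(n, p)).
Proof. by apply/matrixP => i j; rewrite !mxE. Qed.

Lemma fqscaleE m n c (A : 'M[{poly K}]_(m, n)) :
  fqscale iota0 c A = (tconst c)%:M *m (A : 'M[T]_(m, n)).
Proof. by apply/matrixP => i j; rewrite mul_scalar_mx !mxE [RHS](tmulCl iota0). Qed.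

Lemma tmodule_rep d (Phi : {poly Fq} -> 'M[{poly K}]_d) :
  is_tmodule iota0 theta Phi -> is_rep tconst Phi.
Proof.
case=> Phi_lin Phi1 PhiM _; split=> // [c a b|a b]; first by rewrite Phi_lin fqscaleE.
by rewrite PhiM tmulmxE.
Qed.

Lemma der_rep_der d e (Phi : {poly Fq} -> 'M[{poly K}]_d)
    (Psi : {poly Fq} -> 'M[{poly K}]_e) (delta : {poly Fq} -> 'M[{poly K}]_(e, d)) :
  is_der iota0 Phi Psi delta -> is_rep_der tconst Phi Psi delta.
Proof.
case=> delta_lin deltaM; split=> [c a b|a b]; first by rewrite delta_lin fqscaleE.
by rewrite deltaM !tmulmxE.
Qed.

Lemma const_coef_block_lower m n (A : 'M[{poly K}]_m) (C : 'M_(n, m)) (B : 'M_n) :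
  map_mx (fun P : {poly K} => P`_0) (block_mx A 0 C B) =
  block_mx (map_mx (fun P : {poly K} => P`_0) A) 0
           (map_mx (fun P : {poly K} => P`_0) C) (map_mx (fun P : {poly K} => P`_0) B).
Proof.
by rewrite map_block_mx; congr block_mx; apply/matrixP => i j; rewrite !mxE coef0.
Qed.

Lemma tmodule_block_lower d e (Phi : {poly Fq} -> 'M[{poly K}]_d)
    (Psi : {poly Fq} -> 'M[{poly K}]_e) (delta : {poly Fq} -> 'M[T]_(e, d)) :
    is_tmodule iota0 theta Phi -> is_tmodule iota0 theta Psi ->
    is_rep_der tconst Phi Psi delta ->
  is_tmodule iota0 theta (fun a => block_mx (Phi a) 0 (delta a) (Psi a)).
Proof.
move=> Phi_t Psi_t delta_der.
have [Ylin Y1 YM] := rep_block_lower (tmodule_rep Phi_t) (tmodule_rep Psi_t) delta_der.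
split=> [c a b||a b|]; [by rewrite fqscaleE Ylin | exact: Y1 | by rewrite tmulmxE YM |].
case: Phi_t Psi_t => [_ _ _ [N1 [N1nil N1E]]] [_ _ _ [N2 [N2nil N2E]]].
exists (block_mx N1 0 (map_mx (fun P : {poly K} => P`_0) (delta 'X)) N2).
split; first exact: block_lower_nilpotent.
by rewrite const_coef_block_lower N1E N2E (scalar_mx_block d e) add_block_mx addr0 add0r.
Qed.

Section Extension.
Variables (d e : nat) (Phi : {poly Fq} -> 'M[{poly K}]_d)
  (Psi : {poly Fq} -> 'M[{poly K}]_e) (delta : {poly Fq} -> 'M[{poly K}]_(e, d)).
Hypotheses (Phi_t : is_tmodule iota0 theta Phi) (Psi_t : is_tmodule iota0 theta Psi)
  (delta_der : is_der iota0 Phi Psi delta).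
Let X a := block_mx (Phi a) 0 (delta a) (Psi a).

Lemma tmodule_pullback r (Xi : {poly Fq} -> 'M[{poly K}]_r) (g : 'M[{poly K}]_(d, r)) :
    is_tmodule iota0 theta Xi -> is_tmorph Phi Xi g ->
  is_pullback iota0 theta Xi X Phi
    (fun a => block_mx (Xi a) 0 (tmulmx Fq (delta a) g) (Psi a))
    g (row_mx 1%:M 0) (row_mx 1%:M 0) (block_mx g 0 0 1%:M).
Proof.
move=> Xi_t; rewrite /is_tmorph !tmulmxE => gX.
have g_int :=
  rep_intertwine tconst1 tconst_central (tmodule_rep Phi_t) (tmodule_rep Xi_t) gX.
have dg_der : is_rep_der tconst Xi Psi (fun a => tmulmx Fq (delta a) g).
  have [dg_lin dgM] := rep_der_mulmxr (der_rep_der delta_der) g_int.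
  by split=> *; rewrite !tmulmxE ?dg_lin ?dgM.
split.
- exact: tmodule_block_lower.
- by rewrite /is_tmorph !tmulmxE mul_row1_block_lower.
- rewrite /is_tmorph !tmulmxE /X; apply: (@mul_diag_block_lower T _ _ _ _ g 1%:M) => //.
  + by rewrite mul1mx.
  + by rewrite mul1mx mulmx1.
- by rewrite !tmulmxE mul_mx_row mul_row_block !mul1mx !mul0mx !mulmx0 mulmx1 addr0 add0r.
move=> n W u v _; rewrite /is_tmorph !tmulmxE => uW vW guv.
have [w [[wW wu wv] w_uniq]] := block_lower_pullback (R := T) uW vW guv.
exists w; split; first by rewrite /is_tmorph !tmulmxE.
by move=> w'; rewrite /is_tmorph !tmulmxE => -[] *; apply: w_uniq.
Qed.

Lemma tmodule_pushout r (Xi : {poly Fq} -> 'M[{poly K}]_r) (f : 'M[{poly K}]_(r, e)) :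
    is_tmodule iota0 theta Xi -> is_tmorph Xi Psi f ->
  is_pushout iota0 theta X Xi Psi
    (fun a => block_mx (Phi a) 0 (tmulmx Fq f (delta a)) (Xi a))
    (col_mx 0 1%:M) f (block_mx 1%:M 0 0 f) (col_mx 0 1%:M).
Proof.
move=> Xi_t; rewrite /is_tmorph !tmulmxE => fX.
have f_int :=
  rep_intertwine tconst1 tconst_central (tmodule_rep Xi_t) (tmodule_rep Psi_t) fX.
have fd_der : is_rep_der tconst Phi Xi (fun a => tmulmx Fq f (delta a)).
  have [fd_lin fdM] := rep_der_mulmxl tconst_central (der_rep_der delta_der) f_int.
  by split=> *; rewrite !tmulmxE ?fd_lin ?fdM.
split.
- exact: tmodule_block_lower.
- rewrite /is_tmorph !tmulmxE /X; apply: (@mul_diag_block_lower T _ _ _ _ 1%:M f) => //.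
  + by rewrite mul1mx mulmx1.
  + by rewrite mulmx1.
- by rewrite /is_tmorph !tmulmxE mul_block_lower_col01.
- by rewrite !tmulmxE mul_block_col mul_col_mx !mul1mx !mul0mx mulmx1 !add0r.
move=> n W u v _; rewrite /is_tmorph !tmulmxE => uX vXi uv.
have [w [[wY wu wv] w_uniq]] := block_lower_pushout (R := T) uX vXi uv.
exists w; split; first by rewrite /is_tmorph !tmulmxE.
by move=> w'; rewrite /is_tmorph !tmulmxE => -[] *; apply: w_uniq.
Qed.

End Extension.

End TModules.

Unset Implicit Arguments.

Theorem theorem10p1 (Fq : finFieldType) (K : fieldType)
  (iota0 : {rmorphism Fq -> K}) (theta : K) (d e : nat)
  (Phi : {poly Fq} -> 'M[{poly K}]_d) (Psi : {poly Fq} -> 'M[{poly K}]_e)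
  (delta : {poly Fq} -> 'M[{poly K}]_(e, d)) :
  is_tmodule iota0 theta Phi -> is_tmodule iota0 theta Psi ->
  is_der iota0 Phi Psi delta ->
  let X := fun a : {poly Fq} => block_mx (Phi a) 0 (delta a) (Psi a) in
  let i := (col_mx 0 1%:M : 'M[{poly K}]_(d + e, e)) in
  let pi := (row_mx 1%:M 0 : 'M[{poly K}]_(d, d + e)) in
  (* (i) pullback along g : Xi -> Phi *)
  (forall (r : nat) (Xi : {poly Fq} -> 'M[{poly K}]_r) (g : 'M[{poly K}]_(d, r)),
     is_tmodule iota0 theta Xi -> is_tmorph Phi Xi g ->
     is_pullback iota0 theta Xi X Phi
       (fun a => block_mx (Xi a) 0 (tmulmx Fq (delta a) g) (Psi a))
       g pi
       (row_mx 1%:M 0 : 'M[{poly K}]_(r, r + e))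
       (block_mx g 0 0 1%:M : 'M[{poly K}]_(d + e, r + e)))
  /\
  (* (ii) pushout along f : Psi -> Xi *)
  (forall (r : nat) (Xi : {poly Fq} -> 'M[{poly K}]_r) (f : 'M[{poly K}]_(r, e)),
     is_tmodule iota0 theta Xi -> is_tmorph Xi Psi f ->
     is_pushout iota0 theta X Xi Psi
       (fun a => block_mx (Phi a) 0 (tmulmx Fq f (delta a)) (Xi a))
       i f
       (block_mx 1%:M 0 0 f : 'M[{poly K}]_(d + r, d + e))
       (col_mx 0 1%:M : 'M[{poly K}]_(d + r, r))).
Proof.
move=> Phi_t Psi_t delta_der X i pi.
split=> r Xi; [exact: tmodule_pullback | exact: tmodule_pushout].
Qed.
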